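(* Let $K$ be a field and let $S$ be a semigroup with presentation $sgp\langle X\mid R\rangle$ (so $R\subseteq X^\dagger\times X^\dagger$ and the natural morphism $X^\dagger\to S$ induces an isomorphism from $X^\dagger$ modulo the congruence generated by $R$ onto $S$). Let $P:=\{l-r : (l,r)\in R\}\subseteq K[X^\dagger]$, let $Q\subseteq K[X^\dagger]$, and let $Q'$ be the image of $Q$ under the natural morphism $K[X^\dagger]\to K[S]$. Define the mixed set $F$ with tagged part $\dashv\! Q=\{\dashv\! q : q\in Q\}$ and untagged part $P$. Then there is a bijection of sets $$\frac{K[S]}{\langle Q'\rangle^r}\;\cong\;\frac{K[\dashv\! X^\dagger]}{\stackrel{*}{\leftrightarrow}_F},$$ where $\langle Q'\rangle^r$ is the right ideal of the semigroup algebra $K[S]$ generated by $Q'$ and $K[S]/\langle Q'\rangle^r$ is the set of classes of $K[S]$ under $a\sim b\iff a-b\in\langle Q'\rangle^r$.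
   Context: $K[S]$ is the semigroup algebra of $S$ over $K$. $X^\dagger$ is the free semigroup of nonempty words on $X$, $X^*$ the free monoid (empty word $id$), and $K[X^\dagger]$ the free noncommutative $K$-algebra. A semigroup well-ordering $>$ on $X^\dagger$ is fixed: a well-ordering with $m_1>m_2 \Rightarrow um_1v>um_2v$ for all $u,v\in X^*$. For a nonzero polynomial, $\mathtt{LT}$ is its largest term w.r.t. $>$ and $\mathtt{LC}$ its coefficient. Tagged polynomials: $\dashv$ is a symbol; $K[\dashv\! X^\dagger]$ is the $K$-vector space with basis the tagged terms $\dashv\! m$ ($m\in X^\dagger$), a right $K[X^\dagger]$-module via $(\dashv\! m)w=\dashv\!(mw)$. For $p=\sum k_im_i\in K[X^\dagger]$ and $w\in X^*$, $\dashv\! w\,p:=\sum k_i\dashv\!(wm_i)$ and $\dashv\! p:=\dashv\! id\,p$. Tagged terms are ordered by $\dashv\! m_1>\dashv\! m_2\iff m_1>m_2$. Reduction: for a mixed set $F=(F_T,F_P)$, $F_T\subseteq K[\dashv\! X^\dagger]$ (tagged part), $F_P\subseteq K[X^\dagger]$ (untagged part), zero elements ignored, the relation $\to_F$ on $K[\dashv\! X^\dagger]$ is: $f\to_F f-\frac{k}{\mathtt{LC}(f_i)}f_iv$ if $f_i\in F_T$, $v\in X^*$ and $\mathtt{LT}(f_i)v$ occurs in $f$ with coefficient $k\neq0$; and $f\to_F f-\frac{k}{\mathtt{LC}(f_i)}\dashv\! w\,f_i\,v$ if $f_i\in F_P$, $w,v\in X^*$ and $\dashv\!(w\,\mathtt{LT}(f_i)\,v)$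 occurs in $f$ with coefficient $k\neq0$. (The paper normalizes all polynomials to be monic.) $\stackrel{*}{\leftrightarrow}_F$ is the reflexive, symmetric, transitive closure of $\to_F$. *)

From HB Require Import structures.
From mathcomp Require Import all_boot all_order all_algebra.
From mathcomp Require Import finmap.
From mathcomp Require monalg.
From Stdlib Require Import Relations.Relation_Operators.
Import GRing.Theory monalg.

Set Implicit Arguments. Unset Strict Implicit. Unset Printing Implicit Defensive.
Local Open Scope ring_scope.

(* X^dagger : nonempty words over the alphabet X *)
Definition word (X : choiceType) := {w : seq X | w != [::]}.

Lemma cat_word_neq0 (X : choiceType) (u : seq X) (m : word X) (v : seq X) :
  u ++ val m ++ v != [::].
Proof. by case: m => [[|x s]] //=; case: u. Qed.

Definition wcat (X : choiceType) (u : seq X) (m : word X) (v : seq X) : word X :=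
  exist _ (u ++ val m ++ v) (cat_word_neq0 u m v).

Definition wmulw (X : choiceType) (m1 m2 : word X) : word X := wcat [::] m1 (val m2).

Notation wpoly X K := {malg K[word X]}.
(* K[-| X^dagger]: the K-vector space with basis the tagged terms -| m *)
Notation twpoly X K := {malg K[word X]}.

Definition wmul (X : choiceType) (K : fieldType) (w : seq X) (p : wpoly X K) (v : seq X)
  : wpoly X K := \sum_(m <- msupp p) << p@_m *g wcat w m v >>.

Definition dtag (X : choiceType) (K : fieldType) (w : seq X) (p : wpoly X K) : twpoly X K :=
  wmul w p [::].
Definition dtag1 (X : choiceType) (K : fieldType) (p : wpoly X K) : twpoly X K := dtag [::] p.

Definition semigroup_wellorder (X : choiceType) (lt : word X -> word X -> Prop) :=
  [/\ (forall m, ~ lt m m),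
      (forall a b c, lt a b -> lt b c -> lt a c),
      (forall a b, a <> b -> lt a b \/ lt b a),
      well_founded lt &
      (forall m1 m2 (u v : seq X), lt m2 m1 -> lt (wcat u m2 v) (wcat u m1 v))].

Definition is_LT (X : choiceType) (K : fieldType) (lt : word X -> word X -> Prop)
  (f : wpoly X K) (m : word X) :=
  m \in msupp f /\ forall m', m' \in msupp f -> m' <> m -> lt m' m.

Definition red_step (X : choiceType) (K : fieldType) (lt : word X -> word X -> Prop)
  (FT : twpoly X K -> Prop) (FP : wpoly X K -> Prop) (f g : twpoly X K) : Prop :=
  (exists fi m (v : seq X), [/\ FT fi, fi != 0, is_LT lt fi m,
       f@_(wcat [::] m v) != 0 &
       g = f - (f@_(wcat [::] m v) / fi@_m) *: wmul [::] fi v])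
  \/
  (exists fi m (w v : seq X), [/\ FP fi, fi != 0, is_LT lt fi m,
       f@_(wcat w m v) != 0 &
       g = f - (f@_(wcat w m v) / fi@_m) *: wmul w fi v]).

Definition red_equiv (X : choiceType) (K : fieldType) (lt : word X -> word X -> Prop)
  (FT : twpoly X K -> Prop) (FP : wpoly X K -> Prop) : twpoly X K -> twpoly X K -> Prop :=
  clos_refl_sym_trans _ (red_step lt FT FP).

Inductive cong_gen (X : choiceType) (R : word X -> word X -> Prop) : word X -> word X -> Prop :=
  | cg_base a b : R a b -> cong_gen R a b
  | cg_refl a : cong_gen R a a
  | cg_sym a b : cong_gen R a b -> cong_gen R b a
  | cg_trans a b c : cong_gen R a b -> cong_gen R b c -> cong_gen R a c
  | cg_mull a b c : cong_gen R a b -> cong_gen R (wmulw c a) (wmulw c b)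
  | cg_mulr a b c : cong_gen R a b -> cong_gen R (wmulw a c) (wmulw b c).

Definition is_presentation (X : choiceType) (S : Type) (mulS : S -> S -> S)
  (R : word X -> word X -> Prop) (pi : word X -> S) :=
  [/\ (forall a b c, mulS a (mulS b c) = mulS (mulS a b) c),
      (forall a b, pi (wmulw a b) = mulS (pi a) (pi b)),
      (forall s, exists a, pi a = s) &
      (forall a b, pi a = pi b <-> cong_gen R a b)].

Definition salg_mul (S : choiceType) (K : fieldType) (mulS : S -> S -> S)
  (a b : {malg K[S]}) : {malg K[S]} :=
  \sum_(s <- msupp a) \sum_(t <- msupp b) << a@_s * b@_t *g mulS s t >>.

Definition pimg (X S : choiceType) (K : fieldType) (pi : word X -> S) (p : wpoly X K)
  : {malg K[S]} := \sum_(m <- msupp p) << p@_m *g pi m >>.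

Inductive rideal (S : choiceType) (K : fieldType) (mulS : S -> S -> S)
  (G : {malg K[S]} -> Prop) : {malg K[S]} -> Prop :=
  | ri_gen a : G a -> rideal mulS G a
  | ri_zero : rideal mulS G 0
  | ri_add a b : rideal mulS G a -> rideal mulS G b -> rideal mulS G (a + b)
  | ri_scale (k : K) a : rideal mulS G a -> rideal mulS G (k *: a)
  | ri_rmul a b : rideal mulS G a -> rideal mulS G (salg_mul mulS a b).

Definition quot_bij (A B : Type) (eA : A -> A -> Prop) (eB : B -> B -> Prop) :=
  exists f : A -> B,
    (forall a a', eA a a' <-> eB (f a) (f a')) /\ (forall b, exists a, eB (f a) b).

From HB Require Import structures.
From mathcomp Require Import all_boot all_order all_algebra.
From mathcomp Require Import finmap.
From mathcomp Require monalg.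
From Stdlib Require Import Relations.Relation_Operators.
Import GRing.Theory monalg.
Set Implicit Arguments. Unset Strict Implicit. Unset Printing Implicit Defensive.
Local Open Scope ring_scope.

(* Both sides are quotients of K-vector spaces by subspaces.  A reduction step
   subtracts a multiple of some [-| q v] (q in Q) or [-| w p v] (p in P);
   conversely, adding a multiple of such an element is undone by reducing both
   polynomials at its leading term.  Hence f <-*->_F g iff f - g lies in the span
   of these elements.  The natural map K[X^dagger] -> K[S] is onto, its kernel is
   spanned by the two-sided multiples of P (S is X^dagger modulo the congruence
   generated by R), and it maps the span above onto the right ideal generated by
   Q'.  Lifting every element of S to a word therefore gives the bijection. *)

Lemma monalgUZ (K : fieldType) (A : choiceType) (c : K) (m : A) :
  << c *g m >> = c *: << m >>.
Proof. by apply/malgP => k; rewrite mcoeffZ !mcoeffU; case: eqP; rewrite ?mulr1 ?mulr0. Qed.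

Definition reduce_at (K : fieldType) (A : choiceType) (M : A) (x f : {malg K[A]}) :=
  f - (f@_M / x@_M) *: x.

Lemma reduce_atDZ (K : fieldType) (A : choiceType) (M : A) (x : {malg K[A]}) c f :
  x@_M != 0 -> reduce_at M x (f + c *: x) = reduce_at M x f.
Proof.
move=> xM0; rewrite /reduce_at mcoeffD mcoeffZ mulrDl (mulfK xM0) scalerDl.
by rewrite opprD addrACA subrr addr0.
Qed.

Section LinearExtension.
Variables (K : fieldType) (A B : choiceType) (F : A -> {malg K[B]}).

Definition linext (a : {malg K[A]}) : {malg K[B]} := \sum_(m <- msupp a) a@_m *: F m.

Lemma linextEw (d : {fset A}) a : (msupp a `<=` d)%fset ->
  linext a = \sum_(m <- d) a@_m *: F m.
Proof.
move=> le; rewrite /linext (big_fset_incl _ le) // => m _ /mcoeff_outdom ->.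
by rewrite scale0r.
Qed.

Lemma linext_is_linear : linear linext.
Proof.
move=> c a b; pose d := (msupp a `|` msupp b)%fset.
have sab : (msupp (c *: a + b) `<=` d)%fset.
  by apply: fsubset_trans (msuppD_le _ _) _; rewrite fsetSU // msuppZ_le.
rewrite (linextEw sab) (@linextEw d a) ?fsubsetUl // (@linextEw d b) ?fsubsetUr //.
rewrite scaler_sumr -big_split; apply: eq_bigr => m _.
by rewrite mcoeffD mcoeffZ scalerDl scalerA.
Qed.

HB.instance Definition _ :=
  GRing.isLinear.Build K {malg K[A]} {malg K[B]} *:%R linext linext_is_linear.

Lemma linextB a b : linext (a - b) = linext a - linext b.
Proof. exact: linearB. Qed.

Lemma linextU c m : linext << c *g m >> = c *: F m.
Proof. by rewrite (linextEw msuppU_le) big_seq_fset1 mcoeffUU. Qed.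

Lemma linext1 m : linext << m >> = F m.
Proof. by rewrite linextU scale1r. Qed.

End LinearExtension.

Lemma eq_linext (K : fieldType) (A B : choiceType) (F G : A -> {malg K[B]}) :
  F =1 G -> linext F =1 linext G.
Proof. by move=> eFG a; rewrite /linext; apply: eq_bigr => m _; rewrite eFG. Qed.

Lemma linext_unit (K : fieldType) (A : choiceType) (a : {malg K[A]}) :
  linext (fun m => << m >>) a = a.
Proof. by rewrite /linext [RHS]monalgE; apply: eq_bigr => m _; rewrite monalgUZ. Qed.

Lemma linear_linext (K : fieldType) (A B C : choiceType)
    (F : A -> {malg K[B]}) (f : {linear {malg K[B]} -> {malg K[C]}}) a :
  f (linext F a) = linext (fun m => f (F m)) a.
Proof. by rewrite /linext linear_sum; apply: eq_bigr => m _; rewrite linearZ. Qed.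

Lemma linext_comp (K : fieldType) (A B C : choiceType)
    (F : A -> {malg K[B]}) (G : B -> {malg K[C]}) a :
  linext G (linext F a) = linext (fun m => linext G (F m)) a.
Proof. exact: linear_linext. Qed.

Lemma linext_funB (K : fieldType) (A B : choiceType) (F G : A -> {malg K[B]}) a :
  linext (fun m => F m - G m) a = linext F a - linext G a.
Proof. by rewrite /linext -sumrB; apply: eq_bigr => m _; rewrite scalerBr. Qed.

Lemma linext_inj_coef (K : fieldType) (A B : choiceType) (h : A -> B) a m :
  injective h -> (linext (fun m => << h m >>) a : {malg K[B]})@_(h m) = a@_m.
Proof.
move=> inj_h; rewrite /linext [in RHS](monalgE a) !raddf_sum.
apply: eq_bigr => m' _ /=.
by rewrite mcoeffZ !mcoeffU (inj_eq inj_h); case: eqP; rewrite ?mulr1 ?mulr0.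
Qed.

Section Span.
Variables (R : pzRingType) (V : lmodType R).
Implicit Types (G : V -> Prop) (x y : V).

Inductive span G : V -> Prop :=
  | span0 : span G 0
  | span_cons c x y : G x -> span G y -> span G (c *: x + y).

Lemma span_gen G x : G x -> span G x.
Proof. by move=> Gx; rewrite -[x]addr0 -[x]scale1r; apply: span_cons (span0 _). Qed.

Lemma spanD G x y : span G x -> span G y -> span G (x + y).
Proof.
move=> sx sy; elim: sx => [|c x' y' Gx' _ IH]; first by rewrite add0r.
by rewrite -addrA; apply: span_cons.
Qed.

Lemma spanZ G c x : span G x -> span G (c *: x).
Proof.
elim=> [|d x' y' Gx' _ IH]; first by rewrite scaler0; apply: span0.
by rewrite scalerDr scalerA; apply: span_cons.
Qed.

Lemma spanN G x : span G x -> span G (- x).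
Proof. by rewrite -scaleN1r; apply: spanZ. Qed.

Lemma spanB G x y : span G x -> span G y -> span G (x - y).
Proof. by move=> sx sy; apply: spanD => //; apply: spanN. Qed.

Lemma sub_span G G' x : (forall y, G y -> G' y) -> span G x -> span G' x.
Proof.
by move=> GG'; elim=> [|c x' y' Gx' _ IH]; [apply: span0 | apply: span_cons (GG' _ Gx') IH].
Qed.

End Span.

Lemma span_linear (R : pzRingType) (V W : lmodType R) (f : {linear V -> W})
    (G : V -> Prop) (G' : W -> Prop) x :
  (forall y, G y -> span G' (f y)) -> span G x -> span G' (f x).
Proof.
move=> fG; elim=> [|c x' y' Gx' _ IH]; first by rewrite linear0; apply: span0.
by rewrite linearP; apply: spanD => //; apply: spanZ; apply: fG.
Qed.

Lemma span_linext (K : fieldType) (A B : choiceType) (G : {malg K[B]} -> Prop)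
    (F : A -> {malg K[B]}) a :
  (forall m, span G (F m)) -> span G (linext F a).
Proof.
move=> sF; rewrite /linext; elim/big_ind: _ => [|x y|m _].
- exact: span0.
- exact: spanD.
- exact: spanZ.
Qed.

Section Words.
Variables (K : fieldType) (X : choiceType).
Implicit Types (w v : seq X) (m : word X) (p : wpoly X K).

Lemma wcat_inj w v : injective (fun m => wcat w m v).
Proof.
move=> [a a0] [b b0] /(congr1 val) /= /eqP eab; apply: val_inj => /=.
have size_ab : size a = size b.
  by move/eqP/(congr1 size): eab; rewrite !size_cat => /addnI /addIn.
by move: eab; rewrite eqseq_cat // eqxx /= eqseq_cat // => /andP[/eqP].
Qed.

Lemma wcat0 m : wcat [::] m [::] = m.
Proof. by apply: val_inj; rewrite /= cats0. Qed.

Lemma wcat_comp w' w m v v' : wcat w' (wcat w m v) v' = wcat (w' ++ w) m (v ++ v').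
Proof. by apply: val_inj; rewrite /= !catA. Qed.

Lemma nil_or_word (u : seq X) : u = [::] \/ exists c : word X, u = val c.
Proof. by case: u => [|x u]; [left | right; exists (exist _ (x :: u) isT)]. Qed.

Lemma wmulwEl (a b : word X) : wmulw a b = wcat (val a) b [::].
Proof. by apply: val_inj; rewrite /= cats0. Qed.

Lemma wcat_wmulw w m (c : word X) : wcat w m (val c) = wmulw (wcat w m [::]) c.
Proof. by rewrite /wmulw wcat_comp. Qed.

Lemma wmulE w p v : wmul w p v = linext (fun m => << wcat w m v >>) p.
Proof. by rewrite /linext; apply: eq_bigr => m _; rewrite monalgUZ. Qed.

Lemma wmul_nil p : wmul [::] p [::] = p.
Proof. by rewrite wmulE -[RHS]linext_unit; apply: eq_linext => m; rewrite wcat0. Qed.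

Lemma dtag1E p : dtag1 p = p.
Proof. exact: wmul_nil. Qed.

Lemma wmul_comp w' w p v v' : wmul w' (wmul w p v) v' = wmul (w' ++ w) p (v ++ v').
Proof. by rewrite !wmulE [LHS]linext_comp; apply: eq_linext => m; rewrite linext1 wcat_comp. Qed.

Lemma wmul_coef w p v m : (wmul w p v)@_(wcat w m v) = p@_m.
Proof. by rewrite wmulE (linext_inj_coef _ _ (@wcat_inj w v)). Qed.

Lemma wmulBU w l r v :
  wmul w (<< l >> - << r >> : wpoly X K) v = << wcat w l v >> - << wcat w r v >>.
Proof. by rewrite wmulE linextB; congr (_ - _); apply: linext1. Qed.

Lemma wmul0 w v : wmul w (0 : wpoly X K) v = 0.
Proof. by rewrite wmulE linear0. Qed.

End Words.

Lemma pimgE (K : fieldType) (X S : choiceType) (pi : word X -> S) (p : wpoly X K) :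
  pimg pi p = linext (fun m => << pi m >>) p.
Proof. by rewrite /linext; apply: eq_bigr => m _; rewrite monalgUZ. Qed.

Lemma pimg_is_linear (K : fieldType) (X S : choiceType) (pi : word X -> S) :
  linear (pimg (K := K) pi).
Proof. by move=> c p q; rewrite !pimgE linearP. Qed.

HB.instance Definition _ (K : fieldType) (X S : choiceType) (pi : word X -> S) :=
  GRing.isLinear.Build K (wpoly X K) {malg K[S]} *:%R (pimg pi) (pimg_is_linear pi).

Lemma pimgU (K : fieldType) (X S : choiceType) (pi : word X -> S) (m : word X) :
  pimg pi (<< m >> : wpoly X K) = << pi m >>.
Proof. by rewrite pimgE linext1. Qed.

Lemma pimgBU (K : fieldType) (X S : choiceType) (pi : word X -> S) (l r : word X) :
  pimg pi (<< l >> - << r >> : wpoly X K) = << pi l >> - << pi r >>.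
Proof. by rewrite linearB; congr (_ - _); apply: pimgU. Qed.

Lemma salg_mulE (K : fieldType) (S : choiceType) (mulS : S -> S -> S)
    (a b : {malg K[S]}) :
  salg_mul mulS a b = linext (fun t => linext (fun s => << mulS s t >>) a) b.
Proof.
rewrite /salg_mul exchange_big /linext; apply: eq_bigr => t _.
rewrite scaler_sumr; apply: eq_bigr => s _.
by rewrite monalgUZ scalerA mulrC.
Qed.

Lemma cong_wcat (X : choiceType) (R : word X -> word X -> Prop) w v a b :
  cong_gen R a b -> cong_gen R (wcat w a v) (wcat w b v).
Proof.
move=> ab; have lab : cong_gen R (wcat w a [::]) (wcat w b [::]).
  have [->|[c ->]] := nil_or_word w; first by rewrite !wcat0.
  by rewrite -!wmulwEl; apply: cg_mull.
have [->|[c ->]] := nil_or_word v; first by [].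
by rewrite !wcat_wmulw; apply: cg_mulr.
Qed.

Lemma seq_greatest (T : eqType) (r : T -> T -> Prop) (s : seq T) :
    (forall a b c, r a b -> r b c -> r a c) -> (forall a b, a <> b -> r a b \/ r b a) ->
  s != [::] -> exists2 m, m \in s & forall m', m' \in s -> m' <> m -> r m' m.
Proof.
move=> r_trans r_total; elim: s => [|x s IH] // _.
have [->|/IH[m ms m_max]] := eqVneq s [::].
  by exists x; rewrite ?mem_head // => m'; rewrite mem_seq1 => /eqP m'x /(_ m'x).
have [->|xm] := eqVneq x m.
  exists m; rewrite ?mem_head // => m'; rewrite inE => /orP[/eqP m'm /(_ m'm) //|].
  exact: m_max.
have [xm'|mx] := r_total x m (elimN eqP xm).
  exists m; rewrite ?inE ?ms ?orbT // => m'; rewrite inE => /orP[/eqP -> _ //|].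
  exact: m_max.
exists x; rewrite ?mem_head // => m'; rewrite inE => /orP[/eqP m'x /(_ m'x) //|m's m'x].
have [->//|m'm] := eqVneq m' m; exact: r_trans (m_max _ m's (elimN eqP m'm)) mx.
Qed.

Lemma exists_LT (K : fieldType) (X : choiceType) (lt : word X -> word X -> Prop)
    (f : wpoly X K) :
  semigroup_wellorder lt -> f != 0 -> exists m, is_LT lt f m.
Proof.
case=> _ lt_trans lt_total _ _ f0.
have [|m mf m_max] := seq_greatest lt_trans lt_total (s := msupp f); last by exists m.
by apply: contraNneq f0 => supp0; rewrite [f]monalgE supp0 big_nil.
Qed.

Section Reduction.
Variables (K : fieldType) (X : choiceType) (lt : word X -> word X -> Prop).
Variables (FT FP : wpoly X K -> Prop).
Implicit Types (f g x : wpoly X K).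

Definition rmod_gen x := exists q v, FT q /\ x = wmul [::] q v.
Definition ideal_gen x := exists p w v, FP p /\ x = wmul w p v.
Definition red_gen x := rmod_gen x \/ ideal_gen x.

Lemma span_ideal_red x : span ideal_gen x -> span red_gen x.
Proof. by apply: sub_span => y; right. Qed.

Lemma span_ideal_wmul w v x : span ideal_gen x -> span ideal_gen (wmul w x v).
Proof.
rewrite wmulE; apply: span_linear => _ [p [w' [v' [FPp ->]]]].
by apply: span_gen; exists p, (w ++ w'), (v' ++ v); rewrite /= -wmulE wmul_comp.
Qed.

Lemma span_red_wmulr v x : span red_gen x -> span red_gen (wmul [::] x v).
Proof.
rewrite wmulE; apply: span_linear => _ [[q [v' [FTq ->]]] | [p [w' [v' [FPp ->]]]]].
  by apply: span_gen; left; exists q, (v' ++ v); rewrite /= -wmulE wmul_comp.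
by apply: span_gen; right; exists p, w', (v' ++ v); rewrite /= -wmulE wmul_comp.
Qed.

Lemma red_equiv_span f g : red_equiv lt FT FP f g -> span red_gen (f - g).
Proof.
elim=> {f g} [f g [] | f | f g _ IH | f g h _ IH1 _ IH2].
- move=> [q [m [v [FTq _ _ _ ->]]]]; rewrite subKr.
  by apply/spanZ/span_gen; left; exists q, v.
- move=> [p [m [w [v [FPp _ _ _ ->]]]]]; rewrite subKr.
  by apply/spanZ/span_gen; right; exists p, w, v.
- by rewrite subrr; apply: span0.
- by rewrite -opprB; apply: spanN.
- by rewrite -(subrKA g); apply: spanD.
Qed.

Hypothesis lt_wo : semigroup_wellorder lt.

Lemma red_gen_step x : red_gen x -> x != 0 ->
  exists2 M, x@_M != 0 & forall g, g@_M != 0 -> red_step lt FT FP g (reduce_at M x g).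
Proof.
case=> [[q [v [FTq ->]]] | [p [w [v [FPp ->]]]]] x0.
- have q0 : q != 0 by apply: contraNneq x0 => ->; rewrite wmul0.
  have [m LTm] := exists_LT lt_wo q0.
  have qm0 : q@_m != 0 by rewrite mcoeff_neq0; case: LTm.
  exists (wcat [::] m v) => [|g gM]; rewrite ?wmul_coef //.
  by left; exists q, m, v; rewrite /reduce_at wmul_coef.
- have p0 : p != 0 by apply: contraNneq x0 => ->; rewrite wmul0.
  have [m LTm] := exists_LT lt_wo p0.
  have pm0 : p@_m != 0 by rewrite mcoeff_neq0; case: LTm.
  exists (wcat w m v) => [|g gM]; rewrite ?wmul_coef //.
  by right; exists p, m, w, v; rewrite /reduce_at wmul_coef.
Qed.

Lemma red_equiv_addZ x f c : red_gen x -> red_equiv lt FT FP f (f + c *: x).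
Proof.
move=> gx; have [->|x0] := eqVneq x 0; first by rewrite scaler0 addr0; apply: rst_refl.
have [M xM0 red_M] := red_gen_step gx x0.
have red_reduce g : red_equiv lt FT FP g (reduce_at M x g).
  have [gM0|gM0] := eqVneq g@_M 0; last by apply/rst_step/red_M.
  by rewrite /reduce_at gM0 mul0r scale0r subr0; apply: rst_refl.
apply: rst_trans (red_reduce f) _.
by rewrite -(reduce_atDZ c f xM0); apply/rst_sym/red_reduce.
Qed.

Lemma span_red_equiv x f : span red_gen x -> red_equiv lt FT FP f (f + x).
Proof.
move=> sx; elim: sx f => [|c y z gy _ IH] f; first by rewrite addr0; apply: rst_refl.
by rewrite addrA; apply: rst_trans (red_equiv_addZ f c gy) (IH _).
Qed.

Lemma red_equivP f g : red_equiv lt FT FP f g <-> span red_gen (f - g).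
Proof.
split; first exact: red_equiv_span.
by move/spanN/(span_red_equiv f); rewrite opprB addrC subrK.
Qed.

End Reduction.

Definition rel_poly (K : fieldType) (X : choiceType) (R : word X -> word X -> Prop)
  : wpoly X K -> Prop := fun p => exists l r, R l r /\ p = << l >> - << r >>.

Definition tagged (K : fieldType) (X : choiceType) (Q : wpoly X K -> Prop)
  : twpoly X K -> Prop := fun t => exists q, Q q /\ t = dtag1 q.

Definition pimg_set (K : fieldType) (X S : choiceType) (pi : word X -> S)
  (Q : wpoly X K -> Prop) : {malg K[S]} -> Prop := fun a => exists q, Q q /\ a = pimg pi q.

Section Presentation.
Variables (K : fieldType) (X S : choiceType) (mulS : S -> S -> S).
Variables (R : word X -> word X -> Prop) (pi : word X -> S).
Hypothesis pres : is_presentation mulS R pi.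
Variable Q : wpoly X K -> Prop.
Implicit Types (x : wpoly X K) (a b : {malg K[S]}).

Local Notation P := (@rel_poly K X R).
Local Notation gen := (red_gen (tagged Q) P).

Lemma cong_span l r : cong_gen R l r -> span (ideal_gen P) (<< l >> - << r >>).
Proof.
elim=> {l r} [l r Rlr | l | l r _ IH | l m r _ IHlm _ IHmr | l r c _ IH | l r c _ IH].
- apply: span_gen; exists (<< l >> - << r >>), [::], [::].
  by rewrite wmul_nil; split => //; exists l, r.
- by rewrite subrr; apply: span0.
- by rewrite -opprB; apply: spanN.
- by rewrite -(subrKA << m >>); apply: (spanD IHlm IHmr).
- have -> : << wmulw c l >> - << wmulw c r >> =
             wmul (val c) (<< l >> - << r >> : wpoly X K) [::].
    by rewrite wmulBU !wmulwEl.
  exact: span_ideal_wmul.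
- have -> : << wmulw l c >> - << wmulw r c >> =
             wmul [::] (<< l >> - << r >> : wpoly X K) (val c).
    by rewrite wmulBU.
  exact: span_ideal_wmul.
Qed.

Fact pi_surj s : exists m, pi m == s.
Proof. by case: pres => _ _ /(_ s)[m <-] _; exists m. Qed.

Definition pimg_inv : {malg K[S]} -> wpoly X K :=
  linext (fun s => << xchoose (pi_surj s) >>).

HB.instance Definition _ := GRing.Linear.on pimg_inv.

Lemma pimg_invK : cancel pimg_inv (pimg pi).
Proof.
move=> a; rewrite linear_linext -[RHS]linext_unit; apply: eq_linext => s /=.
by rewrite pimgU (eqP (xchooseP (pi_surj s))).
Qed.

(* x - pimg_inv (pimg pi x) lies in the kernel of [pimg pi], which the
   presentation identifies with the span of the two-sided multiples of P. *)
Lemma span_sub_pimg_inv x : span (ideal_gen P) (x - pimg_inv (pimg pi x)).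
Proof.
have -> : pimg_inv (pimg pi x) = linext (fun m => << xchoose (pi_surj (pi m)) >>) x.
  by rewrite /pimg_inv pimgE linext_comp; apply: eq_linext => m; rewrite linext1.
rewrite -{1}[x]linext_unit -linext_funB; apply: span_linext => m.
case: pres => _ _ _ /(_ m (xchoose (pi_surj (pi m))))[piP _].
by apply/cong_span/piP; rewrite (eqP (xchooseP (pi_surj (pi m)))).
Qed.

Lemma span_pimg_invK x : span gen x -> span gen (pimg_inv (pimg pi x)).
Proof.
move=> sx; rewrite -(subKr x (pimg_inv _)).
exact/(spanB sx)/span_ideal_red/span_sub_pimg_inv.
Qed.

Lemma pimg_wmulr x (c : word X) :
  pimg pi (wmul [::] x (val c)) = salg_mul mulS (pimg pi x) << pi c >>.
Proof.
case: pres => _ pi_mul _ _.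
rewrite wmulE linear_linext salg_mulE linext1 pimgE linext_comp.
by apply: eq_linext => m /=; rewrite pimgU linext1 -pi_mul.
Qed.

Lemma salg_mul_pimg_inv a b :
  salg_mul mulS a b = linext (fun m => salg_mul mulS a << pi m >>) (pimg_inv b).
Proof.
rewrite -{1}[b]pimg_invK salg_mulE pimgE linext_comp.
by apply: eq_linext => m; rewrite linext1 salg_mulE linext1.
Qed.

Lemma span_pimg_rideal x : span gen x -> rideal mulS (pimg_set pi Q) (pimg pi x).
Proof.
have gen_rideal y : gen y -> rideal mulS (pimg_set pi Q) (pimg pi y).
  case=> [[_ [v [[q [Qq ->]] ->]]] | [_ [w [v [[l [r [Rlr ->]]] ->]]]]].
    rewrite dtag1E; have [->|[c ->]] := nil_or_word v.
      by rewrite wmul_nil; apply: ri_gen; exists q.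
    by rewrite pimg_wmulr; apply/ri_rmul/ri_gen; exists q.
  have pi_lr : pi (wcat w l v) = pi (wcat w r v).
    by case: pres => _ _ _ ->; apply/cong_wcat/cg_base.
  by rewrite wmulBU pimgBU pi_lr subrr; apply: ri_zero.
elim=> [|c y z gy _ IH]; first by rewrite linear0; apply: ri_zero.
by rewrite linearP; apply: ri_add (ri_scale _ (gen_rideal _ gy)) IH.
Qed.

Lemma rideal_span_pimg_inv a : rideal mulS (pimg_set pi Q) a -> span gen (pimg_inv a).
Proof.
elim=> {a} [_ [q [Qq ->]] | | a b _ IHa _ IHb | k a _ IH | a b _ IH].
- apply: span_pimg_invK; apply: span_gen; left; exists (dtag1 q), [::].
  by split; [exists q | rewrite dtag1E wmul_nil].
- by rewrite linear0; apply: span0.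
- by rewrite linearD; apply: spanD IHa IHb.
- by rewrite linearZ; apply: spanZ IH.
- have -> : salg_mul mulS a b =
      pimg pi (linext (fun m => wmul [::] (pimg_inv a) (val m)) (pimg_inv b)).
    rewrite salg_mul_pimg_inv [RHS]linear_linext; apply: eq_linext => m /=.
    by rewrite pimg_wmulr pimg_invK.
  by apply: span_pimg_invK; apply: span_linext => m; apply: span_red_wmulr.
Qed.

Lemma rideal_pimg_invP a : rideal mulS (pimg_set pi Q) a <-> span gen (pimg_inv a).
Proof.
split; first exact: rideal_span_pimg_inv.
by move/span_pimg_rideal; rewrite pimg_invK.
Qed.

End Presentation.

Theorem corollary3p5 (K : fieldType) (X : choiceType)
  (lt : word X -> word X -> Prop) (Hlt : semigroup_wellorder lt)
  (S : choiceType) (mulS : S -> S -> S) (R : word X -> word X -> Prop)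
  (pi : word X -> S) (Hpres : is_presentation mulS R pi)
  (Q : wpoly X K -> Prop) :
  let P : wpoly X K -> Prop := fun p => exists l r, R l r /\ p = << l >> - << r >> in
  let Q' : {malg K[S]} -> Prop := fun a => exists q, Q q /\ a = pimg pi q in
  let FT : twpoly X K -> Prop := fun t => exists q, Q q /\ t = dtag1 q in
  quot_bij (fun a b : {malg K[S]} => rideal mulS Q' (a - b)) (red_equiv lt FT P).
Proof.
move=> P Q' FT; exists (pimg_inv Hpres); split => [a a' | f].
  by rewrite (red_equivP _ _ Hlt) -linearB (rideal_pimg_invP Hpres).
exists (pimg pi f); apply/(red_equivP _ _ Hlt); rewrite -opprB.
exact/spanN/span_ideal_red/(span_sub_pimg_inv Hpres).
Qed.
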